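(* Let $m\geq 4$, let $\mathcal{S}$ be a locating-dominating set of the grid graph $G_{2,m}=P_2\square P_m$, and let $\mathcal{B}$ be a $(2\times 4)$-block of $G_{2,m}$. Then $|\mathcal{B}\cap\mathcal{S}|\geq 2$.
   Context: $P_n$ is the path on $n$ vertices, $\square$ the Cartesian product of graphs, and $G_{n,m}=P_n\square P_m$ is viewed as a grid with $n$ rows and $m$ columns. A $(n\times \ell)$-block of $G_{n,m}$ ($1\le\ell\le m$) is the induced subgraph (or its vertex set) consisting of $\ell$ consecutive columns. For $C\subseteq V(G)$ and $v\in V(G)$ let $I(v)=N[v]\cap C$ ($N[v]$ the closed neighborhood). $C$ is a locating-dominating set if $I(v)\neq\emptyset$ for all $v\in V(G)\setminus C$ and $I(u)\neq I(v)$ for all distinct $u,v\in V(G)\setminus C$. *)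

From mathcomp Require Import all_boot.
Set Implicit Arguments. Unset Strict Implicit. Unset Printing Implicit Defensive.

(* Grid graph G_{n,m} = P_n [] P_m, vertex (i,j) : row i, column j. *)
Definition grid_adj (n m : nat) (u v : 'I_n * 'I_m) : bool :=
  ((u.1 == v.1) && ((u.2.+1 == v.2 :> nat) || (v.2.+1 == u.2 :> nat)))
  || ((u.2 == v.2) && ((u.1.+1 == v.1 :> nat) || (v.1.+1 == u.1 :> nat))).

Definition closed_nbhd (n m : nat) (v : 'I_n * 'I_m) : {set 'I_n * 'I_m} :=
  [set u | (u == v) || grid_adj v u].

Definition I_code (n m : nat) (C : {set 'I_n * 'I_m}) (v : 'I_n * 'I_m) :=
  closed_nbhd v :&: C.

Definition locating_dominating (n m : nat) (C : {set 'I_n * 'I_m}) : Prop :=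
  (forall v, v \notin C -> I_code C v != set0) /\
  (forall u v, u \notin C -> v \notin C -> u != v -> I_code C u != I_code C v).

Definition block (n m : nat) (j l : nat) : {set 'I_n * 'I_m} :=
  [set v : 'I_n * 'I_m | (j <= v.2) && (v.2 < j + l)].

(** The four vertices M of the two middle columns of the block B have their
    closed neighbourhoods inside B.  If at most one vertex of M lies in S, two
    distinct vertices u, v of M lie outside S; their codes I(u), I(v) are
    nonempty subsets of B ∩ S and differ, so B ∩ S has at least two elements. *)

From mathcomp Require Import all_boot.
From mathcomp Require Import zify.

Lemma ld_card_setI_gt1 (n m : nat) (S Y : {set 'I_n * 'I_m}) (u v : 'I_n * 'I_m) :
  locating_dominating S -> u \notin S -> v \notin S -> u != v ->
  closed_nbhd u \subset Y -> closed_nbhd v \subset Y -> 1 < #|Y :&: S|.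
Proof.
move=> [dom loc] uS vS uv uY vY; rewrite ltnNge; apply/negP => YS1.
have code_eq w : w \notin S -> closed_nbhd w \subset Y -> I_code S w = Y :&: S.
  move=> wS wY; apply/eqP; rewrite eqEcard setSI //=.
  by apply: leq_trans YS1 _; rewrite card_gt0 dom.
by move/eqP: (loc u v uS vS uv); rewrite !code_eq.
Qed.

Lemma closed_nbhd_sub_block (n m j l : nat) (v : 'I_n * 'I_m) :
  j < v.2 -> v.2.+1 < j + l -> closed_nbhd v \subset block n m j l.
Proof.
case: v => [v1 v2] /= jv vl; apply/subsetP => -[u1 u2].
rewrite !inE /grid_adj /=.
by case/orP => [/eqP[_ ->]|/orP[/andP[_ /orP[/eqP E|/eqP E]]|/andP[/eqP E _]]];
  rewrite -?E; apply/andP; split; lia.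
Qed.

Lemma card_block (n m j l : nat) : j + l <= m -> #|block n m j l| = n * l.
Proof.
move=> jlm.
pose col (i : 'I_l) : 'I_m :=
  Ordinal (leq_trans (etrans (ltn_add2l j i l) (ltn_ord i)) jlm).
have col_inj : injective col by move=> i k /(congr1 val)/addnI/val_inj.
have -> : block n m j l = setX setT (col @: setT).
  apply/setP => -[v1 v2]; rewrite !inE /=; apply/andP/imsetP => [[jv vl]|[i _ ->]].
    have vjl : v2 - j < l by lia.
    by exists (Ordinal vjl) => //; apply: val_inj; rewrite /= subnKC.
  by split; rewrite /= ?ltn_add2l ?leq_addr.
by rewrite cardsX cardsT card_ord card_imset // cardsT card_ord.
Qed.

Theorem lemma4p3 (m : nat) (S : {set 'I_2 * 'I_m}) (j : nat) :
  4 <= m -> locating_dominating S -> j + 4 <= m ->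
  2 <= #|block 2 m j 4 :&: S|.
Proof.
move=> _ ldS jm; set B := block 2 m j 4; set M := block 2 m j.+1 2.
have MB : M \subset B by apply/subsetP => v; rewrite !inE => /andP[? ?]; apply/andP; lia.
have nbhd_MB v : v \in M -> closed_nbhd v \subset B.
  by rewrite inE => /andP[? ?]; apply: closed_nbhd_sub_block; lia.
have [MS2|MS1] := ltnP 1 #|M :&: S|.
  by apply: leq_trans MS2 (subset_leq_card (setSI S MB)).
have /card_gt1P[u [v [uM vM uv]]] : 1 < #|M :\: S|.
  by rewrite cardsD card_block; lia.
move: uM vM => /setDP[uM uS] /setDP[vM vS].
exact: ld_card_setI_gt1 ldS uS vS uv (nbhd_MB u uM) (nbhd_MB v vM).
Qed.
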